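(* Let $F_a(x,u,\partial u,\ldots,\partial^Nu)=0$, $a=1,\ldots,M$, be a system of differential equations for $u=(u^1,\ldots,u^m)$ with solution space $\mathcal{E}$, admitting an adjoint-symmetry $Q^a(x,u,\partial u,\ldots,\partial^su)$, i.e. $(\delta^*_QF)_\alpha|_{\mathcal{E}}=0$, and let $P^\alpha(x,u,\partial u,\ldots,\partial^ru)$ be the characteristic of a local symmetry, i.e. $(\delta_PF)_a|_{\mathcal{E}}=0$. Let $L=v^aF_a$ with auxiliary variables $v^a$, and let $\Phi^i(P;L)$ be the Noether conserved current of the extended Euler–Lagrange system $F_a=0$, $(\delta^*_vF)_\alpha=0$ associated with the extension of the symmetry, defined through $\delta_P L = P^\alpha E_{u^\alpha}(L)+D_i\Phi^i(P;L)$ (Fréchet derivative in $u$ only, explicitly $\Phi^i(P;L)=\Psi^i(P,v;F)$). Then $\Phi^i(P;L)|_{v=Q}$ is equivalent to (indeed equal to) the conserved current $\Psi^i(P,Q;F)$ given by the adjoint-symmetry/symmetry formula $$Q^a(\delta_PF)_a-P^\alpha(\delta^*_QF)_\alpha=D_i\Psi^i(P,Q;F),$$ and $D_i\Psi^i(P,Q;F)|_{\mathcal{E}}=0$.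
   Context: Independent variables $x=(x^1,\ldots,x^n)$, dependent variables $u=(u^1,\ldots,u^m)$; summation over repeated indices. Jet coordinates $u^\alpha_I$ for multi-indices $I$; $D_i$ is the total derivative, $D_I=D_{i_1}\cdots D_{i_k}$, $|I|=k$. ''On $\mathcal{E}$'' means evaluated using the system and its differential consequences. Fréchet derivative $(\delta_wF)_a=\sum_I(D_Iw^\alpha)\partial F_a/\partial u^\alpha_I$; adjoint $(\delta^*_vF)_\alpha=\sum_I(-1)^{|I|}D_I(v^a\partial F_a/\partial u^\alpha_I)$; Euler operator $E_{u^\alpha}(f)=\sum_I(-1)^{|I|}D_I(\partial f/\partial u^\alpha_I)$. The vector $$\Psi^i(w,v;F)=\sum_{k\ge1}\sum_{|J|+|K|=k-1}(-1)^{|K|}(D_Jw^\alpha)\,D_K\Big(v^a\frac{\partial F_a}{\partial u^\alpha_{JKi}}\Big).$$ A symmetry generator $\xi^i\partial_{x^i}+\eta^\alpha\partial_{u^\alpha}$ has characteristic $P^\alpha=\eta^\alpha-\xi^iu^\alpha_i$. In the paper's terminology a system admitting an adjoint-symmetry is called ''nonlinearly self-adjoint'' in the general sense. *)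

From Stdlib Require Import Reals.
From Coquelicot Require Import Coquelicot.
From mathcomp Require Import all_boot.

Set Implicit Arguments.
Unset Strict Implicit.
Unset Printing Implicit Defensive.

Local Open Scope R_scope.

Notation "\rsum_ ( i <- r ) F" := (\big[Rplus/R0]_(i <- r) F)
  (at level 41, F at level 41, i, r at level 50).
Notation "\rsum_ ( i < n ) F" := (\big[Rplus/R0]_(i < n) F)
  (at level 41, F at level 41, i, n at level 50).
Notation "\rsum_ ( i : T ) F" := (\big[Rplus/R0]_(i : T) F)
  (at level 41, F at level 41, i at level 50).

Section Jets.

(* n = number of independent variables x^1..x^n,
   p = number of dependent variables (jet coordinates u^beta_kappa). *)
Variables n p : nat.

(* Unordered multi-indices, as count vectors kappa : 'I_n -> nat. *)
Definition mi := {ffun 'I_n -> nat}.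
Definition mabs (k : mi) : nat := (\sum_(i < n) k i)%N.
Definition mi0 : mi := [ffun => 0%N].
Definition mi_add (k : mi) (i : 'I_n) : mi := [ffun j => (k j + (j == i))%N].
Definition mi_cnt (s : seq 'I_n) : mi := [ffun j => count_mem j s].
Definition mi_seq (k : mi) : seq 'I_n := flatten [seq nseq (k i) i | i <- enum 'I_n].
Definition mnom (s : seq 'I_n) : nat :=
  ((size s)`! %/ \prod_(i < n) (count_mem i s)`!)%N.

(* Jet coordinates: x^i (inl i), and u^beta_kappa (inr (beta, kappa)). *)
Definition coord := ('I_n + 'I_p * mi)%type.
Definition jet := coord -> R.
Definition dfun := jet -> R.

Definition upd (z : jet) (c : coord) (t : R) : jet :=
  fun c' => if c' == c then t else z c'.

Definition pd (c : coord) (f : dfun) : dfun :=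
  fun z => Derive (fun t => f (upd z c t)) (z c).

Definition iter_pd (cs : seq coord) (f : dfun) : dfun := foldr pd f cs.

(* The total derivative vector field D_i = d/dx^i + u^beta_{kappa+i} d/du^beta_kappa,
   evaluated at the jet point z. *)
Definition tvec (i : 'I_n) (z : jet) : jet :=
  fun c => match c with
           | inl j => if j == i then 1 else 0
           | inr (b, k) => z (inr (b, mi_add k i))
           end.

Definition Dt (i : 'I_n) (f : dfun) : dfun :=
  fun z => Derive (fun t => f (fun c => z c + t * tvec i z c)) 0.

Definition DI (s : seq 'I_n) (f : dfun) : dfun := foldr Dt f s.
Definition DK (k : mi) (f : dfun) : dfun := DI (mi_seq k) f.

Definition dep_ord (K : nat) (f : dfun) : Prop :=
  forall z z' : jet,
    (forall i, z (inl i) = z' (inl i)) ->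
    (forall b (k : mi), (mabs k <= K)%N -> z (inr (b, k)) = z' (inr (b, k))) ->
    f z = f z'.

Definition smooth_ord (K : nat) (f : dfun) : Prop :=
  forall cs : seq coord,
    (forall (z : jet) (c : coord),
        ex_derive (fun t => iter_pd cs f (upd z c t)) (z c)) /\
    (forall (z : jet) (eps : R), 0 < eps ->
       exists del : R, 0 < del /\
         forall z' : jet,
           (forall i, Rabs (z' (inl i) - z (inl i)) < del) ->
           (forall b (k : mi), (mabs k <= K)%N ->
               Rabs (z' (inr (b, k)) - z (inr (b, k))) < del) ->
           Rabs (iter_pd cs f z' - iter_pd cs f z) < eps).

Definition diff_fun_ord (K : nat) (f : dfun) : Prop := dep_ord K f /\ smooth_ord K f.
Definition diff_fun (f : dfun) : Prop := exists K, diff_fun_ord K f.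

(* The "u" variables u^1..u^m among the p dependent variables, via emb. *)
Variables (m M : nat) (emb : 'I_m -> 'I_p).

(* partial derivative d f / d u^alpha_I for an ORDERED multi-index I
   (symmetric convention: the derivative w.r.t. the coordinate u^alpha_[I],
    divided by the number of distinct orderings of I) *)
Definition pdU (a : 'I_m) (s : seq 'I_n) (f : dfun) : dfun :=
  fun z => pd (inr (emb a, mi_cnt s)) f z / INR (mnom s).

(* All sums over multi-indices are truncated at order N (the order of F). *)
Variable N : nat.

Definition frech1 (w : 'I_m -> dfun) (f : dfun) : dfun :=
  fun z => \rsum_(al < m) \rsum_(k < N.+1) \rsum_(I : k.-tuple 'I_n)
             (DI I (w al) z * pdU al I f z).

Definition frech (w : 'I_m -> dfun) (F : 'I_M -> dfun) (a : 'I_M) : dfun :=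
  frech1 w (F a).

Definition adj (v : 'I_M -> dfun) (F : 'I_M -> dfun) (al : 'I_m) : dfun :=
  fun z => \rsum_(k < N.+1) \rsum_(I : k.-tuple 'I_n)
             ((-1) ^ k * DI I (fun z' => \rsum_(a < M) (v a z' * pdU al I (F a) z')) z).

Definition euler (f : dfun) (al : 'I_m) : dfun :=
  fun z => \rsum_(k < N.+1) \rsum_(I : k.-tuple 'I_n)
             ((-1) ^ k * DI I (pdU al I f) z).

(* Psi^i(w, v; F) =
   sum_{k>=1} sum_{|J|+|K|=k-1} (-1)^{|K|} (D_J w^alpha) D_K (v^a dF_a/du^alpha_{JKi});
   here k.+1 plays the role of the paper's k, |J| = j, |K| = k - j. *)
Definition Psi (w : 'I_m -> dfun) (v : 'I_M -> dfun) (F : 'I_M -> dfun)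
    (i : 'I_n) : dfun :=
  fun z => \rsum_(k < N) \rsum_(j < k.+1)
           \rsum_(J : j.-tuple 'I_n) \rsum_(K : (k - j).-tuple 'I_n) \rsum_(al < m)
             ((-1) ^ (k - j) * DI J (w al) z *
              DI K (fun z' => \rsum_(a < M)
                               (v a z' * pdU al (J ++ K ++ [:: i]) (F a) z')) z).

End Jets.

Section OnE.
Variables n p M : nat.
(* g vanishes on the solution space E of F_a = 0: at every jet point where
   all the differential consequences D_J F_a vanish. *)
Definition onE (F : 'I_M -> dfun n p) (g : dfun n p) : Prop :=
  forall z : jet n p, (forall (a : 'I_M) (J : seq 'I_n), DI J (F a) z = 0) -> g z = 0.
End OnE.

Section Extended.
Variables n m M : nat.

Definition proj_u (z : jet n (m + M)) : jet n m :=
  fun c => match c with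
           | inl i => z (inl i)
           | inr (al, k) => z (inr (lshift M al, k))
           end.

Definition liftU (f : dfun n m) : dfun n (m + M) := fun z => f (proj_u z).

Definition vcoord (a : 'I_M) : dfun n (m + M) :=
  fun z => z (inr (rshift m a, mi0 n)).

Definition substQ (Q : 'I_M -> dfun n m) (z : jet n m) : jet n (m + M) :=
  fun c => match c with
           | inl i => z (inl i)
           | inr (b, k) => match split b with
                           | inl al => z (inr (al, k))
                           | inr a => DK k (Q a) z
                           end
           end.

Definition Lag (F : 'I_M -> dfun n m) : dfun n (m + M) :=
  fun z => \rsum_(a < M) (vcoord a z * liftU (F a) z).

Definition Phi (N : nat) (P : 'I_m -> dfun n m) (F : 'I_M -> dfun n m) (i : 'I_n)
  : dfun n (m + M) :=
  Psi (lshift M) N (fun al => liftU (P al)) vcoord (fun a => liftU (F a)) i.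

End Extended.

From Stdlib Require Import Reals Lra FunctionalExtensionality.
From Coquelicot Require Import Coquelicot.
From mathcomp Require Import all_boot.
From HB Require Import structures.

Set Implicit Arguments.
Unset Strict Implicit.
Unset Printing Implicit Defensive.

Local Open Scope R_scope.

(* For an arbitrary multiplier v in place of Q, the identity
     v^a (δ_w F)_a - w^α (δ^*_v F)_α = D_i Ψ^i(w, v; F)
   is a telescoping sum: with
     T_{k,j} = Σ_{|J| = j, |K| = k-j} (-1)^(k-j) D_J w · D_K (v ∂F/∂u_{JK}),
   the total divergence of the k-th layer of Ψ is T_{k+1,k+1} - T_{k+1,0}, because
   total derivatives commute and ∂F/∂u_I is symmetric in I.  Taking v = Q gives the
   adjoint-symmetry/symmetry identity; taking for v the new coordinates of the
   extended jet space, where ∂L/∂u_I = v ∂F/∂u_I, gives the Noether identity for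
   L = v^a F_a.  The substitution v_κ := D_κ Q commutes with total derivatives on
   expressions linear in v, whence Φ(P;L)|_{v=Q} = Ψ(P,Q;F); on E both terms on the
   left vanish.  That total derivatives commute rests on Schwarz's theorem and on the
   chain rule along lines for functions of finitely many jet coordinates. *)

HB.instance Definition _ := Monoid.isComLaw.Build R R0 Rplus
  (fun x y z => esym (Rplus_assoc x y z)) Rplus_comm Rplus_0_l.
HB.instance Definition _ := Monoid.isMulLaw.Build R R0 Rmult Rmult_0_l Rmult_0_r.
HB.instance Definition _ :=
  Monoid.isAddLaw.Build R Rmult Rplus Rmult_plus_distr_r Rmult_plus_distr_l.

(** * Calculus on the jet space *)

Section JetCalculus.
Variables n p : nat.
Local Notation jet := (jet n p).
Local Notation dfun := (dfun n p).
Local Notation coord := (coord n p).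
Implicit Types (z w v : jet) (f g h : dfun) (c d : coord) (cs : seq coord).

Lemma upd_same z c t : upd z c t c = t.
Proof. by rewrite /upd eqxx. Qed.

Lemma upd_upd z c s t : upd (upd z c s) c t = upd z c t.
Proof. by apply: functional_extensionality => c'; rewrite /upd; case: (c' == c). Qed.

Lemma upd_id z c : upd z c (z c) = z.
Proof. by apply: functional_extensionality => c'; rewrite /upd; case: eqP => [->|]. Qed.

Lemma upd_comm z c d s t : c != d -> upd (upd z c s) d t = upd (upd z d t) c s.
Proof.
move=> cd; apply: functional_extensionality => c'; rewrite /upd.
by case: eqP => [->|//]; rewrite eq_sym (negbTE cd).
Qed.

Definition cst (a : R) : dfun := fun _ => a.
Definition crd c : dfun := fun z => z c.

Definition coord_order c : nat := if c is inr (_, k) then mabs k else 0%N.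

Lemma dep_ord_eq K f z w : dep_ord K f ->
  (forall c, (coord_order c <= K)%N -> z c = w c) -> f z = f w.
Proof. by move=> Hf E; apply: Hf => [i|b k hk]; [apply: E | apply: (E (inr (b, k)))]. Qed.

Lemma iter_pd_cat cs ds f : iter_pd (cs ++ ds) f = iter_pd cs (iter_pd ds f).
Proof. exact: foldr_cat. Qed.

Lemma pd_upd f z c s : pd c f (upd z c s) = Derive (fun t => f (upd z c t)) s.
Proof. by rewrite /pd upd_same; under Derive_ext => t do rewrite upd_upd. Qed.

Lemma pd_cst a c : pd c (cst a) = cst 0.
Proof. by apply: functional_extensionality => z; apply: Derive_const. Qed.

Lemma pd_crd c0 c : pd c (crd c0) = cst (if c0 == c then 1 else 0).
Proof.
apply: functional_extensionality => z; rewrite /pd /crd /cst /upd.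
case: (c0 =P c) => [_|_]; last exact: Derive_const.
exact: (is_derive_unique _ _ _ (is_derive_id (K := R_AbsRing) _)).
Qed.

Lemma dep_ord_pd K f c : dep_ord K f -> dep_ord K (pd c f).
Proof.
move=> Hf z w Hx Hu.
have E c' : (coord_order c' <= K)%N -> z c' = w c'.
  by case: c' => [i _|[b k] hk]; [apply: Hx | apply: Hu].
rewrite /pd; case: (leqP (coord_order c) K) => hc.
  rewrite (E c hc); congr Derive; apply: functional_extensionality => t.
  by apply: (dep_ord_eq Hf) => c' hc'; rewrite /upd; case: eqP => // _; apply: E.
have C v : (fun t => f (upd v c t)) = fun _ => f v.
  apply: functional_extensionality => t; apply: (dep_ord_eq Hf) => c' hc'.
  by rewrite /upd; case: eqP => // ec; move: hc'; rewrite ec leqNgt hc.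
by rewrite !C !Derive_const.
Qed.

Lemma dep_ord_iter_pd K f cs : dep_ord K f -> dep_ord K (iter_pd cs f).
Proof. by move=> Hf; elim: cs => //= c cs IH; apply: dep_ord_pd. Qed.

(* [continuous] refers to Coquelicot's uniform structure on [coord -> R], whose
   balls bound all coordinates at once. *)
Definition regular f : Prop :=
  (forall z c s, ex_derive (fun t => f (upd z c t)) s) /\ forall z, continuous f z.

Lemma smooth_ord_regular K f : smooth_ord K f -> forall cs, regular (iter_pd cs f).
Proof.
move=> Hf cs; have [Hd Hc] := Hf cs; split.
  move=> z c s; have := Hd (upd z c s) c; rewrite upd_same.
  by apply: ex_derive_ext => t; rewrite upd_upd.
move=> z; apply/filterlim_locally => eps.
have [del [hdel Hdel]] := Hc z eps (cond_pos eps).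
by exists (mkposreal del hdel) => w hw; apply: Hdel => [i|b k _]; apply: hw.
Qed.

(* Coordinates of order > K are frozen at their value in [z], so that the
   continuity of [h] in all coordinates applies. *)
Lemma smooth_ord_of_regular K h :
  dep_ord K h -> (forall cs, regular (iter_pd cs h)) -> smooth_ord K h.
Proof.
move=> Hh Hr cs; have [Hd Hc] := Hr cs; split => [z c|z eps heps].
  exact: Hd.
have /filterlim_locally /(_ (mkposreal eps heps)) [del Hdel] := Hc z.
exists del; split => [|w Hx Hu]; first exact: cond_pos.
pose w' : jet := fun c => if (coord_order c <= K)%N then w c else z c.
have -> : iter_pd cs h w = iter_pd cs h w'.
  by apply: (dep_ord_eq (dep_ord_iter_pd cs Hh)) => c hc; rewrite /w' hc.
apply: Hdel => c; rewrite /w'; case: ifP => hc; last first.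
  by rewrite /ball /= /AbsRing_ball minus_eq_zero abs_zero; apply: cond_pos.
by case: c hc => [i _|[b k] hk]; [apply: Hx | apply: Hu].
Qed.

Lemma regular_cst a : regular (cst a).
Proof. by split=> [*|z]; [apply: ex_derive_const | apply: continuous_const]. Qed.

Lemma regular_crd c0 : regular (crd c0).
Proof.
split=> [z c s|z].
  rewrite /crd /upd; case: eqP => _; [exact: ex_derive_id | exact: ex_derive_const].
by apply/filterlim_locally => eps; exists eps => w; apply.
Qed.

Lemma regular_mulD f g h :
  regular f -> regular g -> regular h -> regular (fun z => f z * g z + h z).
Proof.
move=> [Df Cf] [Dg Cg] [Dh Ch]; split=> [z c s|z].
  by apply: (ex_derive_plus (K := R_AbsRing) (V := R_NormedModule)) => //; apply: ex_derive_mult.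
exact: (continuous_plus (V := R_NormedModule) (fun z => f z * g z) h z
          (continuous_mult f g z (Cf z) (Cg z)) (Ch z)).
Qed.

Lemma pd_mulD f g h c : regular f -> regular g -> regular h ->
  pd c (fun z => f z * g z + h z) = fun z => pd c f z * g z + (f z * pd c g z + pd c h z).
Proof.
move=> [Df _] [Dg _] [Dh _]; apply: functional_extensionality => z.
rewrite /pd Derive_plus ?Derive_mult ?upd_id //; first ring.
exact: ex_derive_mult.
Qed.

(* Unlike products, finite sums of products are closed under [pd]. *)
Inductive sum_of_products K : dfun -> Prop :=
| sop_nil : sum_of_products K (cst 0)
| sop_cons f g h : diff_fun_ord K f -> diff_fun_ord K g -> sum_of_products K h ->
    sum_of_products K (fun z => f z * g z + h z).

Lemma diff_fun_ord_regular K f : diff_fun_ord K f -> regular f.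
Proof. by move=> [_ Hs]; apply: (smooth_ord_regular Hs [::]). Qed.

Lemma diff_fun_ord_pd K f c : diff_fun_ord K f -> diff_fun_ord K (pd c f).
Proof.
move=> [Hd Hs]; split; first exact: dep_ord_pd.
by move=> cs; have := Hs (cs ++ [:: c]); rewrite iter_pd_cat.
Qed.

Lemma sum_of_products_regular K h : sum_of_products K h -> regular h.
Proof.
elim=> [|f g h' Hf Hg _ IH]; first exact: regular_cst.
by apply: regular_mulD; [exact: diff_fun_ord_regular Hf | exact: diff_fun_ord_regular Hg |].
Qed.

Lemma sum_of_products_pd K h c : sum_of_products K h -> sum_of_products K (pd c h).
Proof.
elim=> [|f g h' Hf Hg Hh IH]; first by rewrite pd_cst; apply: sop_nil.
rewrite pd_mulD; [| exact: diff_fun_ord_regular Hf | exact: diff_fun_ord_regular Hg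
                 | exact: sum_of_products_regular Hh].
apply: sop_cons; [exact: diff_fun_ord_pd | exact: Hg |].
by apply: sop_cons => //; apply: diff_fun_ord_pd.
Qed.

Lemma diff_fun_ord_of_sum_of_products K h :
  dep_ord K h -> sum_of_products K h -> diff_fun_ord K h.
Proof.
move=> Hd Hh; split => //; apply: smooth_ord_of_regular => // cs.
by apply: (sum_of_products_regular (K := K)); elim: cs => //= c cs; apply: sum_of_products_pd.
Qed.

Lemma diff_fun_ord_cst K a : diff_fun_ord K (cst a).
Proof.
split=> //; apply: smooth_ord_of_regular => // cs.
have [b ->] : exists b, iter_pd cs (cst a) = cst b.
  by elim: cs => [|c cs [b IH]] /=; [exists a | rewrite IH pd_cst; exists 0].
exact: regular_cst.
Qed.

Lemma diff_fun_ord_crd c0 : diff_fun_ord (coord_order c0) (crd c0).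
Proof.
have Hd : dep_ord (coord_order c0) (crd c0).
  by case: c0 => [i|[b k]] z w Hx Hu; [apply: Hx | apply: Hu].
split=> //; apply: smooth_ord_of_regular => // cs.
have [->|[b ->]] : iter_pd cs (crd c0) = crd c0 \/ exists b, iter_pd cs (crd c0) = cst b.
  elim: cs => [|c cs IH] /=; first by left.
  by right; case: IH => [->|[b ->]]; [rewrite pd_crd | rewrite pd_cst]; eexists.
- exact: regular_crd.
- exact: regular_cst.
Qed.

Lemma diff_fun_ord_mono K K' f : (K <= K')%N -> diff_fun_ord K f -> diff_fun_ord K' f.
Proof.
move=> hK [Hd Hs]; split=> [z w Hx Hu|cs].
  by apply: Hd => // b k hk; apply: Hu; apply: leq_trans hk hK.
have [Hcs Ccs] := Hs cs; split=> // z eps heps.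
have [del [hdel Hdel]] := Ccs z eps heps; exists del; split=> // w Hx Hu.
by apply: Hdel => // b k hk; apply: Hu; apply: leq_trans hk hK.
Qed.

Lemma diff_fun_ord_mul K f g :
  diff_fun_ord K f -> diff_fun_ord K g -> diff_fun_ord K (fun z => f z * g z).
Proof.
move=> Hf Hg; apply: diff_fun_ord_of_sum_of_products.
  by move=> z w Hx Hu; rewrite (Hf.1 z w Hx Hu) (Hg.1 z w Hx Hu).
have -> : (fun z => f z * g z) = fun z => f z * g z + cst 0 z.
  by apply: functional_extensionality => z; rewrite /cst Rplus_0_r.
by apply: sop_cons => //; apply: sop_nil.
Qed.

Lemma diff_fun_ord_add K f g :
  diff_fun_ord K f -> diff_fun_ord K g -> diff_fun_ord K (fun z => f z + g z).
Proof.
move=> Hf Hg; apply: diff_fun_ord_of_sum_of_products.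
  by move=> z w Hx Hu; rewrite (Hf.1 z w Hx Hu) (Hg.1 z w Hx Hu).
have -> : (fun z => f z + g z) = fun z => f z * cst 1 z + (g z * cst 1 z + cst 0 z).
  by apply: functional_extensionality => z; rewrite /cst; ring.
by do 2 (apply: sop_cons => //; first exact: diff_fun_ord_cst); apply: sop_nil.
Qed.

Lemma diff_fun_cst a : diff_fun (cst a).
Proof. by exists 0%N; apply: diff_fun_ord_cst. Qed.

Lemma diff_fun_crd c : diff_fun (crd c).
Proof. by eexists; apply: diff_fun_ord_crd. Qed.

Lemma diff_fun_pd c f : diff_fun f -> diff_fun (pd c f).
Proof. by move=> [K Hf]; exists K; apply: diff_fun_ord_pd. Qed.

Lemma diff_fun_mul f g : diff_fun f -> diff_fun g -> diff_fun (fun z => f z * g z).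
Proof.
move=> [K1 Hf] [K2 Hg]; exists (maxn K1 K2).
by apply: diff_fun_ord_mul; [apply: diff_fun_ord_mono Hf | apply: diff_fun_ord_mono Hg];
  rewrite ?leq_maxl ?leq_maxr.
Qed.

Lemma diff_fun_add f g : diff_fun f -> diff_fun g -> diff_fun (fun z => f z + g z).
Proof.
move=> [K1 Hf] [K2 Hg]; exists (maxn K1 K2).
by apply: diff_fun_ord_add; [apply: diff_fun_ord_mono Hf | apply: diff_fun_ord_mono Hg];
  rewrite ?leq_maxl ?leq_maxr.
Qed.

Lemma diff_fun_scal a f : diff_fun f -> diff_fun (fun z => a * f z).
Proof. exact: (diff_fun_mul (diff_fun_cst a)). Qed.

Lemma diff_fun_sum (T : Type) (r : seq T) (F : T -> dfun) :
  (forall x, diff_fun (F x)) -> diff_fun (fun z => \rsum_(x <- r) F x z).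
Proof.
move=> HF; elim: r => [|x r IH].
  suff -> : (fun z => \rsum_(x <- [::]) F x z) = cst 0 by apply: diff_fun_cst.
  by apply: functional_extensionality => z; rewrite big_nil.
suff -> : (fun z => \rsum_(y <- x :: r) F y z) = fun z => F x z + \rsum_(y <- r) F y z.
  exact: diff_fun_add.
by apply: functional_extensionality => z; rewrite big_cons.
Qed.

(** * The chain rule along lines and total derivatives *)

Definition line_on z v (L : seq coord) (t : R) : jet :=
  fun c => z c + t * (if c \in L then v c else 0).

Lemma line_on_nil z v t : line_on z v [::] t = z.
Proof. by apply: functional_extensionality => c; rewrite /line_on in_nil Rmult_0_r Rplus_0_r. Qed.

Lemma line_on_cons z v a L t :
  line_on z v (a :: L) t = upd (line_on z v L t) a (z a + t * v a).
Proof.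
apply: functional_extensionality => c; rewrite /line_on /upd in_cons.
by case: eqP => [->|].
Qed.

Lemma line_on_notin z v a L t : a \notin L -> line_on z v L t a = z a.
Proof. by move=> /negbTE aL; rewrite /line_on aL Rmult_0_r Rplus_0_r. Qed.

Lemma Rsum_abs_ge0 (L : seq coord) v : 0 <= \rsum_(c <- L) Rabs (v c).
Proof. by elim/big_ind: _ => [|x y|c _]; [lra | lra | apply: Rabs_pos]. Qed.

Lemma Rabs_le_Rsum_abs (L : seq coord) v c : c \in L -> Rabs (v c) <= \rsum_(c' <- L) Rabs (v c').
Proof.
elim: L => // a L IH; rewrite in_cons big_cons => /orP [/eqP ->|/IH h];
  have := Rsum_abs_ge0 L v; have := Rabs_pos (v a); lra.
Qed.

Lemma upd_line_on_near z v a L t x : Rabs (x - z a) <= Rabs t * Rabs (v a) ->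
  forall c, Rabs (upd (line_on z v L t) a x c - z c) <= Rabs t * \rsum_(c' <- a :: L) Rabs (v c').
Proof.
move=> hx c; rewrite /upd /line_on.
have hS c' : c' \in a :: L -> Rabs t * Rabs (v c') <= Rabs t * \rsum_(c'' <- a :: L) Rabs (v c'').
  by move=> /Rabs_le_Rsum_abs h; apply: Rmult_le_compat_l => //; apply: Rabs_pos.
case: eqP => [->|_]; first by apply: Rle_trans hx (hS a (mem_head a L)).
rewrite (_ : _ + _ - _ = t * (if c \in L then v c else 0)); last by ring.
rewrite Rabs_mult; case: ifP => cL; first by apply: hS; rewrite in_cons cL orbT.
by rewrite Rabs_R0 Rmult_0_r; apply: Rmult_le_pos; [apply: Rabs_pos | apply: Rsum_abs_ge0].
Qed.

Lemma MVT_upd f w a x y : (forall s, ex_derive (fun t => f (upd w a t)) s) ->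
  exists xi, Rabs (xi - x) <= Rabs (y - x) /\
    f (upd w a y) - f (upd w a x) = pd a f (upd w a xi) * (y - x).
Proof.
move=> Hd.
have Hder s : is_derive (fun t => f (upd w a t)) s (pd a f (upd w a s)).
  by rewrite pd_upd; apply: Derive_correct.
have [xi [hxi ->]] := MVT_gen (fun t => f (upd w a t)) x y (fun s => pd a f (upd w a s))
  (fun s _ => Hder s)
  (fun s _ => proj2 (continuity_pt_filterlim _ _) (ex_derive_continuous _ _ (Hd s))).
exists xi; split=> //; move: hxi; rewrite /Rmin /Rmax.
by case: Rle_dec => _ hxi; rewrite /Rabs; do 2 case: Rcase_abs; lra.
Qed.

(* Mean value theorem in the coordinate [a], plus continuity of [pd a f] at [z]. *)
Lemma is_derive_upd_line_on f z v a L :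
  (forall w s, ex_derive (fun t => f (upd w a t)) s) -> continuous (pd a f) z ->
  is_derive (fun t => f (upd (line_on z v L t) a (z a + t * v a))
                      - f (upd (line_on z v L t) a (z a))) 0 (v a * pd a f z).
Proof.
move=> Hd Hc; apply/is_derive_Reals => eps heps.
set S := \rsum_(c <- a :: L) Rabs (v c).
have hS : 0 <= S := Rsum_abs_ge0 (a :: L) v; have ha := Rabs_pos (v a).
have heps' : 0 < eps / (1 + Rabs (v a)) by apply: Rdiv_lt_0_compat; lra.
have /filterlim_locally /(_ (mkposreal _ heps')) [del Hdel] := Hc.
have hdel : 0 < del / (1 + S) by apply: Rdiv_lt_0_compat; [apply: cond_pos | lra].
exists (mkposreal _ hdel) => h h0 /= hh.
set W := line_on z v L h.
have [xi [hxi Exi]] := MVT_upd (z a) (z a + h * v a) (Hd W).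
rewrite !Rplus_0_l Rmult_0_l Rplus_0_r Rminus_diag Rminus_0_r -/W Exi.
rewrite (_ : _ / h - _ = v a * (pd a f (upd W a xi) - pd a f z)); last by field.
have Hxi : Rabs (pd a f (upd W a xi) - pd a f z) < eps / (1 + Rabs (v a)).
  apply: Hdel => c; change (Rabs (upd W a xi c - z c) < del).
  apply: Rle_lt_trans (upd_line_on_near L (x := xi) _ c) _.
    by rewrite -Rabs_mult; move: hxi; rewrite (_ : _ + _ - _ = h * v a) //; ring.
  apply: Rle_lt_trans (_ : Rabs h * (1 + S) < del).
    by apply: Rmult_le_compat_l; [apply: Rabs_pos | rewrite -/S; lra].
  have := Rmult_lt_compat_r (1 + S) _ _ (ltac:(lra) : 0 < 1 + S) hh.
  by rewrite /Rdiv Rmult_assoc Rinv_l ?Rmult_1_r //; lra.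
rewrite Rabs_mult; apply: Rle_lt_trans (_ : Rabs (v a) * (eps / (1 + Rabs (v a))) < eps).
  by apply: Rmult_le_compat_l => //; lra.
rewrite (_ : _ * _ = eps - eps / (1 + Rabs (v a))); [lra | field; lra].
Qed.

Lemma is_derive_line_on f z v L : uniq L ->
  (forall w c s, ex_derive (fun t => f (upd w c t)) s) -> (forall c, continuous (pd c f) z) ->
  is_derive (fun t => f (line_on z v L t)) 0 (\rsum_(c <- L) v c * pd c f z).
Proof.
move=> + Hd Hc; elim: L => [_|a L IH /andP [aL uL]].
  rewrite big_nil; apply: (is_derive_ext (fun _ => f z)); last exact: is_derive_const.
  by move=> t; rewrite line_on_nil.
have E t : upd (line_on z v L t) a (z a) = line_on z v L t.
  by rewrite -(line_on_notin z v t aL) upd_id.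
rewrite big_cons; apply: (is_derive_ext (fun t =>
  (f (upd (line_on z v L t) a (z a + t * v a)) - f (upd (line_on z v L t) a (z a)))
  + f (line_on z v L t))).
  by move=> t; rewrite line_on_cons E /Rminus Rplus_assoc Rplus_opp_l Rplus_0_r.
apply: (is_derive_plus (K := R_AbsRing) (V := R_NormedModule)); last exact: IH uL.
by apply: is_derive_upd_line_on => // w; apply: Hd.
Qed.

Lemma mi_le_mabs (k : mi n) i : (k i <= mabs k)%N.
Proof. by rewrite /mabs (bigD1 i) //= leq_addr. Qed.

Lemma low_order_coords K :
  exists L : seq coord, uniq L /\ forall c, (coord_order c <= K)%N -> c \in L.
Proof.
pose mkc b (kk : {ffun 'I_n -> 'I_K.+1}) : coord := inr (b, [ffun i => nat_of_ord (kk i)]).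
exists (undup ([seq inl i | i <- enum 'I_n] ++
               [seq mkc b kk | b <- enum 'I_p, kk <- enum {ffun 'I_n -> 'I_K.+1}])).
split=> [|[i _|[b k] hk]]; first exact: undup_uniq.
  by rewrite mem_undup mem_cat map_f ?mem_enum.
rewrite mem_undup mem_cat; apply/orP; right.
have -> : k = [ffun i => nat_of_ord ([ffun j => inord (k j) : 'I_K.+1] i)].
  by apply/ffunP => i; rewrite !ffunE inordK // ltnS (leq_trans (mi_le_mabs k i)).
by apply: (allpairs_f mkc); rewrite mem_enum.
Qed.

Lemma is_derive_line K f L z v : diff_fun_ord K f -> uniq L ->
  (forall c, (coord_order c <= K)%N -> c \in L) ->
  is_derive (fun t => f (fun c => z c + t * v c)) 0 (\rsum_(c <- L) v c * pd c f z).
Proof.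
move=> Hf uL HL; apply: (is_derive_ext (fun t => f (line_on z v L t))).
  by move=> t; apply: (dep_ord_eq Hf.1) => c hc; rewrite /line_on HL.
apply: is_derive_line_on => // [w c s|c].
  by have [Hd _] := diff_fun_ord_regular Hf; apply: Hd.
by have [_ Hc] := diff_fun_ord_regular (diff_fun_ord_pd c Hf); apply: Hc.
Qed.

Lemma Dt_expand K f L i z : diff_fun_ord K f -> uniq L ->
  (forall c, (coord_order c <= K)%N -> c \in L) ->
  Dt i f z = \rsum_(c <- L) tvec i z c * pd c f z.
Proof. by move=> Hf uL HL; apply: is_derive_unique; apply: is_derive_line Hf uL HL. Qed.

Lemma ex_derive_line f z v : diff_fun f -> ex_derive (fun t => f (fun c => z c + t * v c)) 0.
Proof.
move=> [K Hf]; have [L [uL HL]] := low_order_coords K.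
by eexists; apply: is_derive_line Hf uL HL.
Qed.

Lemma line_at0 f z v : f (fun c => z c + 0 * v c) = f z.
Proof. by congr f; apply: functional_extensionality => c; ring. Qed.

Lemma Dt_mul f g i z : diff_fun f -> diff_fun g ->
  Dt i (fun z => f z * g z) z = Dt i f z * g z + f z * Dt i g z.
Proof.
move=> Hf Hg; rewrite /Dt Derive_mult ?line_at0 //; exact: ex_derive_line.
Qed.

Lemma Dt_add f g i z : diff_fun f -> diff_fun g ->
  Dt i (fun z => f z + g z) z = Dt i f z + Dt i g z.
Proof. by move=> Hf Hg; rewrite /Dt Derive_plus //; apply: ex_derive_line. Qed.

Lemma Dt_cst a i z : Dt i (cst a) z = 0.
Proof. exact: Derive_const. Qed.

Lemma Dt_scal a f i z : Dt i (fun z => a * f z) z = a * Dt i f z.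
Proof. exact: Derive_scal. Qed.

Lemma Dt_crd c i z : Dt i (crd c) z = tvec i z c.
Proof.
apply: is_derive_unique.
have : is_derive (fun t => z c + t * tvec i z c) 0 (0 + 1 * tvec i z c).
  apply: (is_derive_plus (K := R_AbsRing) (V := R_NormedModule)); first exact: is_derive_const.
  by apply: is_derive_scal_l; apply: (is_derive_id (K := R_AbsRing)).
by rewrite Rplus_0_l Rmult_1_l.
Qed.

Lemma Dt_sum (T : Type) (r : seq T) (F : T -> dfun) i z : (forall x, diff_fun (F x)) ->
  Dt i (fun z => \rsum_(x <- r) F x z) z = \rsum_(x <- r) Dt i (F x) z.
Proof.
move=> HF; elim: r => [|x r IH].
  suff -> : (fun z => \rsum_(x <- [::]) F x z) = cst 0 by rewrite big_nil Dt_cst.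
  by apply: functional_extensionality => w; rewrite big_nil.
rewrite big_cons -IH -Dt_add //; last exact: diff_fun_sum.
by congr Dt; apply: functional_extensionality => w; rewrite big_cons.
Qed.

Lemma diff_fun_tvec i c : diff_fun (fun z => tvec i z c).
Proof. by case: c => [j|[b k]]; [apply: diff_fun_cst | apply: diff_fun_crd]. Qed.

Lemma diff_fun_Dt i f : diff_fun f -> diff_fun (Dt i f).
Proof.
move=> [K Hf]; have [L [uL HL]] := low_order_coords K.
suff -> : Dt i f = fun z => \rsum_(c <- L) tvec i z c * pd c f z.
  apply: diff_fun_sum => c; apply: diff_fun_mul; first exact: diff_fun_tvec.
  by apply: diff_fun_pd; exists K.
by apply: functional_extensionality => z; apply: Dt_expand Hf uL HL.
Qed.

Lemma diff_fun_DI s f : diff_fun f -> diff_fun (DI s f).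
Proof. by move=> Hf; elim: s => //= i s; apply: diff_fun_Dt. Qed.

Lemma continuity_2d_pt_upd g z c d : continuous g z ->
  continuity_2d_pt (fun x y => g (upd (upd z c x) d y)) (z c) (z d).
Proof.
move=> Hg eps; have /filterlim_locally /(_ eps) [del Hdel] := Hg.
exists del => x y hx hy; rewrite !upd_id.
apply: Hdel => c'; change (Rabs (upd (upd z c x) d y c' - z c') < del).
rewrite /upd; case: eqP => [->|_] //; case: eqP => [->|_] //.
by rewrite Rminus_diag Rabs_R0; apply: cond_pos.
Qed.

Lemma pd_comm K f c d z : diff_fun_ord K f -> pd c (pd d f) z = pd d (pd c f) z.
Proof.
move=> Hf; case: (eqVneq c d) => [->//|cd].
have [Df _] := diff_fun_ord_regular Hf.
have [Dcf _] := diff_fun_ord_regular (diff_fun_ord_pd c Hf).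
have [Ddf _] := diff_fun_ord_regular (diff_fun_ord_pd d Hf).
have [_ Ccdf] := diff_fun_ord_regular (diff_fun_ord_pd c (diff_fun_ord_pd d Hf)).
have [_ Cdcf] := diff_fun_ord_regular (diff_fun_ord_pd d (diff_fun_ord_pd c Hf)).
pose phi x y := f (upd (upd z c x) d y).
have upd_dc x y : upd (upd z d y) c x = upd (upd z c x) d y by rewrite upd_comm // eq_sym.
have D2 x y : Derive (fun t => phi x t) y = pd d f (upd (upd z c x) d y) by rewrite pd_upd.
have D1 x y : Derive (fun t => phi t y) x = pd c f (upd (upd z c x) d y).
  by rewrite -upd_dc pd_upd; apply: Derive_ext => t; rewrite upd_dc.
have D21 x y : Derive (fun t => Derive (fun s => phi t s) y) x
               = pd c (pd d f) (upd (upd z c x) d y).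
  by rewrite -upd_dc pd_upd; apply: Derive_ext => t; rewrite D2 upd_dc.
have D12 x y : Derive (fun t => Derive (fun s => phi s t) x) y
               = pd d (pd c f) (upd (upd z c x) d y).
  by rewrite pd_upd; apply: Derive_ext => t; rewrite D1.
have Ez : z = upd (upd z c (z c)) d (z d) by rewrite !upd_id.
rewrite [in LHS]Ez -D21 [in RHS]Ez -D12; apply: Schwarz.
- exists (mkposreal 1 Rlt_0_1) => x y _ _; split; [|split; [|split]].
  + apply: (ex_derive_ext (fun t => f (upd (upd z d y) c t))); last exact: Df.
    by move=> t; rewrite upd_dc.
  + exact: Df.
  + apply: (ex_derive_ext (fun t => pd d f (upd (upd z d y) c t))); last exact: Ddf.
    by move=> t; rewrite D2 upd_dc.
  + apply: (ex_derive_ext (fun t => pd c f (upd (upd z c x) d t))); last exact: Dcf.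
    by move=> t; rewrite D1.
- apply: (continuity_2d_pt_ext (fun x y => pd c (pd d f) (upd (upd z c x) d y))).
    by move=> x y; rewrite D21.
  exact: continuity_2d_pt_upd.
- apply: (continuity_2d_pt_ext (fun x y => pd d (pd c f) (upd (upd z c x) d y))).
    by move=> x y; rewrite D12.
  exact: continuity_2d_pt_upd.
Qed.

Lemma Dt_tvec i c i' z : Dt i' (fun w => tvec i w c) z =
  if c is inr (b, k) then z (inr (b, mi_add (mi_add k i) i')) else 0.
Proof. by case: c => [j|[b k]]; [apply: Dt_cst | apply: Dt_crd]. Qed.

Lemma Dt_Dt_expand K f L i j z : diff_fun_ord K f -> uniq L ->
  (forall c, (coord_order c <= K)%N -> c \in L) ->
  Dt i (Dt j f) z =
    \rsum_(d <- L) Dt i (fun w => tvec j w d) z * pd d f z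
    + \rsum_(d <- L) \rsum_(c <- L) tvec j z d * tvec i z c * pd c (pd d f) z.
Proof.
move=> Hf uL HL.
have df_pd d : diff_fun (pd d f) by exists K; apply: diff_fun_ord_pd.
have -> : Dt j f = fun w => \rsum_(d <- L) tvec j w d * pd d f w.
  by apply: functional_extensionality => w; apply: Dt_expand Hf uL HL.
rewrite Dt_sum => [|d]; last by apply: diff_fun_mul; [apply: diff_fun_tvec | apply: df_pd].
rewrite -big_split /=; apply: eq_bigr => d _.
rewrite Dt_mul; [|exact: diff_fun_tvec | exact: df_pd].
rewrite (Dt_expand i z (diff_fun_ord_pd d Hf) uL HL) big_distrr /=.
by congr (_ + _); apply: eq_bigr => c _; ring.
Qed.

Lemma mi_add_comm (k : mi n) i j : mi_add (mi_add k i) j = mi_add (mi_add k j) i.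
Proof. by apply/ffunP => x; rewrite !ffunE -!addnA (addnC (x == j)). Qed.

Lemma Dt_comm f i j z : diff_fun f -> Dt i (Dt j f) z = Dt j (Dt i f) z.
Proof.
move=> [K Hf]; have [L [uL HL]] := low_order_coords K.
rewrite !(Dt_Dt_expand _ _ _ Hf uL HL); congr (_ + _).
  by apply: eq_bigr => -[l|[b k]] _; rewrite !Dt_tvec // mi_add_comm.
rewrite exchange_big; apply: eq_bigr => d _; apply: eq_bigr => c _.
by rewrite (pd_comm c d z Hf); ring.
Qed.

Lemma DI_rem (s : seq 'I_n) i f : diff_fun f -> i \in s -> DI s f = Dt i (DI (rem i s) f).
Proof.
move=> Hf; elim: s => [//|j s IH] /=; case: (eqVneq j i) => [->//|ji].
rewrite in_cons eq_sym (negbTE ji) /= => /IH ->.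
by apply: functional_extensionality => z; apply: Dt_comm; apply: diff_fun_DI.
Qed.

Lemma DI_perm (s s' : seq 'I_n) f : diff_fun f -> perm_eq s s' -> DI s f = DI s' f.
Proof.
move=> Hf; elim: s s' => [|i s IH] s' hp; first by case: s' hp => // i s' /perm_size.
have is' : i \in s' by rewrite -(perm_mem hp) mem_head.
rewrite (DI_rem Hf is') /=; congr (Dt i); apply: IH.
by rewrite -(perm_cons i) (perm_trans hp) // perm_to_rem.
Qed.

Lemma count_mi_seq (k : mi n) j : count_mem j (mi_seq k) = k j.
Proof.
rewrite /mi_seq count_flatten -map_comp sumnE big_map big_enum /= (bigD1 j) //=.
rewrite count_nseq /= eqxx mul1n big1 ?addn0 // => i /negbTE ij.
by rewrite count_nseq /= ij mul0n.
Qed.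

Lemma mi_seq_add (k : mi n) i : perm_eq (i :: mi_seq k) (mi_seq (mi_add k i)).
Proof.
apply/allP => j _ /=; apply/eqP.
by rewrite !count_mi_seq ffunE addnC eq_sym.
Qed.

Lemma mi_seq0 : mi_seq (mi0 n) = [::].
Proof.
apply: size0nil; rewrite -count_predT.
have /perm_size : perm_eq (mi_seq (mi0 n)) [::].
  by apply/allP => j _ /=; rewrite count_mi_seq ffunE.
by rewrite count_predT.
Qed.

Lemma DK_add (k : mi n) i f : diff_fun f -> DK (mi_add k i) f = Dt i (DK k f).
Proof. by move=> Hf; rewrite /DK -(DI_perm Hf (mi_seq_add k i)). Qed.

Lemma DK0 f : DK (mi0 n) f = f.
Proof. by rewrite /DK mi_seq0. Qed.

Lemma mi_cnt_perm (s1 s2 : seq 'I_n) : perm_eq s1 s2 -> mi_cnt s1 = mi_cnt s2.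
Proof. by move=> /permP H; apply/ffunP => j; rewrite !ffunE H. Qed.

Lemma mnom_perm (s1 s2 : seq 'I_n) : perm_eq s1 s2 -> mnom s1 = mnom s2.
Proof.
move=> hp; rewrite /mnom (perm_size hp); move/permP: hp => H.
by congr (_ %/ _)%N; apply: eq_bigr => i _; rewrite H.
Qed.

End JetCalculus.

(** * The telescoping identity *)

Lemma Rsum_opp (I : Type) (r : seq I) (F : I -> R) :
  \rsum_(x <- r) - F x = - \rsum_(x <- r) F x.
Proof. by rewrite (big_morph Ropp Ropp_plus_distr Ropp_0). Qed.

Lemma Rsum_telescope (g : nat -> R) k : \rsum_(j < k.+1) (g j.+1 - g j) = g k.+1 - g 0%N.
Proof. by elim: k => [|k IH]; rewrite big_ord_recr ?big_ord0 ?IH /=; ring. Qed.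

Lemma Rsum_tuple0 n (G : seq 'I_n -> R) : \rsum_(K : 0.-tuple 'I_n) G K = G [::].
Proof. by rewrite (big_pred1 [tuple]) // => t /=; rewrite [t]tuple0; apply/esym/eqP. Qed.

Lemma Rsum_tuple_cons n j (G : seq 'I_n -> R) :
  \rsum_(J : j.-tuple 'I_n) \rsum_(i < n) G (i :: J) = \rsum_(J : j.+1.-tuple 'I_n) G J.
Proof.
rewrite exchange_big pair_big /=.
rewrite (reindex (fun p : 'I_n * j.-tuple 'I_n => [tuple of p.1 :: p.2])) //=.
exists (fun t : j.+1.-tuple 'I_n => (thead t, [tuple of behead t])).
  by move=> [i J] _ /=; congr (_, _); apply: val_inj.
by move=> [[|a s] //= hs] _; apply: val_inj.
Qed.

Section Telescope.
Variables (n p m M : nat) (emb : 'I_m -> 'I_p) (N : nat).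
Variables (w : 'I_m -> dfun n p) (v : 'I_M -> dfun n p) (F : 'I_M -> dfun n p).
Hypotheses (Hw : forall al, diff_fun (w al)) (Hv : forall a, diff_fun (v a))
  (HF : forall a, diff_fun (F a)).

Definition vdF (al : 'I_m) (s : seq 'I_n) : dfun n p :=
  fun z => \rsum_(a < M) (v a z * pdU emb al s (F a) z).

Lemma diff_fun_pdU al s (f : dfun n p) : diff_fun f -> diff_fun (pdU emb al s f).
Proof.
move=> Hf; have -> : pdU emb al s f = fun z => / INR (mnom s) * pd (inr (emb al, mi_cnt s)) f z.
  by apply: functional_extensionality => z; rewrite /pdU Rmult_comm.
by apply: diff_fun_scal; apply: diff_fun_pd.
Qed.

Lemma diff_fun_vdF al s : diff_fun (vdF al s).
Proof. by apply: diff_fun_sum => a; apply: diff_fun_mul => //; apply: diff_fun_pdU. Qed.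

Lemma pdU_perm al (s s' : seq 'I_n) f : perm_eq s s' -> pdU emb al s f = pdU emb al s' f.
Proof. by move=> hp; rewrite /pdU (mi_cnt_perm hp) (mnom_perm hp). Qed.

Lemma vdF_perm al (s s' : seq 'I_n) : perm_eq s s' -> vdF al s = vdF al s'.
Proof.
move=> hp; apply: functional_extensionality => z.
by apply: eq_bigr => a _; rewrite (pdU_perm _ _ hp).
Qed.

Definition Psi_term al k (i : 'I_n) : dfun n p := fun z =>
  \rsum_(j < k.+1) \rsum_(J : j.-tuple 'I_n) \rsum_(K : (k - j).-tuple 'I_n)
     ((-1) ^ (k - j) * (DI J (w al) z * DI K (vdF al (J ++ K ++ [:: i])) z)).

Lemma Psi_sum_Psi_term i :
  Psi emb N w v F i = fun z => \rsum_(k < N) \rsum_(al < m) Psi_term al k i z.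
Proof.
apply: functional_extensionality => z; apply: eq_bigr => k _.
rewrite [RHS]exchange_big; apply: eq_bigr => j _.
rewrite [RHS]exchange_big; apply: eq_bigr => J _.
rewrite [RHS]exchange_big; apply: eq_bigr => K _.
by apply: eq_bigr => al _; rewrite Rmult_assoc.
Qed.

Lemma diff_fun_Psi_summand al k j (J K s : seq 'I_n) :
  diff_fun (fun z => (-1) ^ (k - j) * (DI J (w al) z * DI K (vdF al s) z)).
Proof.
by apply: diff_fun_scal; apply: diff_fun_mul; apply: diff_fun_DI => //; apply: diff_fun_vdF.
Qed.

Lemma diff_fun_Psi_term al k i : diff_fun (Psi_term al k i).
Proof. by do 3 (apply: diff_fun_sum => ?); apply: diff_fun_Psi_summand. Qed.

Variable z : jet n p.

(* [tel al k j] is the T_{k,j} of the header, restricted to the index [al]. *)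
Definition tel_summand al k j (J K : seq 'I_n) :=
  (-1) ^ (k - j) * (DI J (w al) z * DI K (vdF al (J ++ K)) z).
Definition tel al k j :=
  \rsum_(J : j.-tuple 'I_n) \rsum_(K : (k - j).-tuple 'I_n) tel_summand al k j J K.

Lemma Dt_Psi_term al k i : Dt i (Psi_term al k i) z =
  \rsum_(j < k.+1) \rsum_(J : j.-tuple 'I_n) \rsum_(K : (k - j).-tuple 'I_n)
     ((-1) ^ (k - j) * (DI (i :: J) (w al) z * DI K (vdF al (J ++ K ++ [:: i])) z
                       + DI J (w al) z * DI (i :: K) (vdF al (J ++ K ++ [:: i])) z)).
Proof.
rewrite Dt_sum => [|j]; last by do 2 (apply: diff_fun_sum => ?); apply: diff_fun_Psi_summand.
apply: eq_bigr => j _; rewrite Dt_sum => [|J]; last first.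
  by apply: diff_fun_sum => ?; apply: diff_fun_Psi_summand.
apply: eq_bigr => J _; rewrite Dt_sum => [|K]; last exact: diff_fun_Psi_summand.
apply: eq_bigr => K _; rewrite Dt_scal Dt_mul //; apply: diff_fun_DI => //; exact: diff_fun_vdF.
Qed.

(* Moving [i] into [J] or into [K] uses the symmetry of [pdU] in its multi-index. *)
Lemma tel_consJ al k j :
  \rsum_(i < n) \rsum_(J : j.-tuple 'I_n) \rsum_(K : (k - j).-tuple 'I_n)
     ((-1) ^ (k - j) * (DI (i :: J) (w al) z * DI K (vdF al (J ++ K ++ [:: i])) z))
  = tel al k.+1 j.+1.
Proof.
rewrite /tel -(Rsum_tuple_cons j (fun J' =>
  \rsum_(K : (k.+1 - j.+1).-tuple 'I_n) tel_summand al k.+1 j.+1 J' K)).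
rewrite exchange_big /=; apply: eq_bigr => J _.
apply: eq_bigr => i _; apply: eq_bigr => K _; rewrite /tel_summand /=.
by rewrite (vdF_perm al (s' := (i :: J) ++ K)) // catA cats1 perm_rcons.
Qed.

Lemma tel_consK al k j : (j <= k)%N ->
  \rsum_(i < n) \rsum_(J : j.-tuple 'I_n) \rsum_(K : (k - j).-tuple 'I_n)
     ((-1) ^ (k - j) * (DI J (w al) z * DI (i :: K) (vdF al (J ++ K ++ [:: i])) z))
  = - tel al k.+1 j.
Proof.
move=> hj; rewrite /tel (subSn hj) -Rsum_opp exchange_big /=; apply: eq_bigr => J _.
rewrite -Rsum_opp -(Rsum_tuple_cons (k - j) (fun K' => - tel_summand al k.+1 j J K')).
rewrite exchange_big /=; apply: eq_bigr => K _.
apply: eq_bigr => i _; rewrite /tel_summand (subSn hj) /=.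
rewrite (vdF_perm al (s' := J ++ i :: K)); last by rewrite perm_cat2l cats1 perm_rcons.
ring.
Qed.

Lemma sum_Dt_Psi_term al k :
  \rsum_(i < n) Dt i (Psi_term al k i) z = tel al k.+1 k.+1 - tel al k.+1 0.
Proof.
rewrite -(Rsum_telescope (tel al k.+1) k).
under eq_bigr => i _ do rewrite Dt_Psi_term.
rewrite exchange_big /=; apply: eq_bigr => j _.
have hj : (j <= k)%N by rewrite -ltnS.
under eq_bigr => i _ do under eq_bigr => J _ do under eq_bigr => K _ do rewrite Rmult_plus_distr_l.
under eq_bigr => i _ do under eq_bigr => J _ do rewrite big_split /=.
under eq_bigr => i _ do rewrite big_split /=.
by rewrite big_split /= tel_consJ tel_consK.
Qed.

Lemma tel_diag al k : tel al k k = \rsum_(I : k.-tuple 'I_n) (DI I (w al) z * vdF al I z).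
Proof.
apply: eq_bigr => J _; rewrite subnn Rsum_tuple0 /tel_summand subnn cats0 /=; ring.
Qed.

Lemma tel0 al k : tel al k 0 = w al z * \rsum_(I : k.-tuple 'I_n) ((-1) ^ k * DI I (vdF al I) z).
Proof.
rewrite /tel subn0 (Rsum_tuple0 (fun J => \rsum_(K : k.-tuple 'I_n) tel_summand al k 0 J K)).
rewrite big_distrr /=.
by apply: eq_bigr => K _; rewrite /tel_summand subn0 /=; ring.
Qed.

Lemma sum_Dt_Psi :
  \rsum_(al < m) \rsum_(k < N.+1) \rsum_(I : k.-tuple 'I_n) (DI I (w al) z * vdF al I z)
  - \rsum_(al < m) (w al z * \rsum_(k < N.+1) \rsum_(I : k.-tuple 'I_n)
                                ((-1) ^ k * DI I (vdF al I) z))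
  = \rsum_(i < n) Dt i (Psi emb N w v F i) z.
Proof.
have E i : Dt i (Psi emb N w v F i) z = \rsum_(k < N) \rsum_(al < m) Dt i (Psi_term al k i) z.
  rewrite Psi_sum_Psi_term Dt_sum => [|k]; last first.
    by apply: diff_fun_sum => al; apply: diff_fun_Psi_term.
  by apply: eq_bigr => k _; rewrite Dt_sum // => al; apply: diff_fun_Psi_term.
under [RHS]eq_bigr => i _ do rewrite E.
rewrite [RHS]exchange_big /=.
under [RHS]eq_bigr => k _ do rewrite exchange_big /=.
under [RHS]eq_bigr => k _ do under eq_bigr => al _ do rewrite sum_Dt_Psi_term.
rewrite [RHS]exchange_big /= /Rminus -Rsum_opp -big_split /=; apply: eq_bigr => al _.
under eq_bigr => k _ do rewrite -tel_diag.
rewrite big_distrr /=.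
under [X in _ + - X = _]eq_bigr => k _ do rewrite -tel0.
rewrite -Rsum_opp -big_split /= big_ord_recl /= Rplus_opp_r Rplus_0_l.
by apply: eq_bigr => k _.
Qed.

End Telescope.

(** * The extended jet space *)

Lemma split_lshift m M (al : 'I_m) : split (lshift M al) = inl al.
Proof. exact: (unsplitK (inl al)). Qed.

Lemma split_rshift m M (a : 'I_M) : split (rshift m a) = inr a.
Proof. exact: (unsplitK (inr a)). Qed.

Section Lift.
Variables n m M : nat.
Local Notation ljet := (jet n (m + M)).

Definition ucoord (c : coord n (m + M)) : option (coord n m) :=
  match c with
  | inl i => Some (inl i)
  | inr (b, k) => if split b is inl al then Some (inr (al, k)) else None
  end.

Lemma proj_u_upd (z : ljet) c t : proj_u (upd z c t) =
  if ucoord c is Some c' then upd (proj_u z) c' t else proj_u z.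
Proof.
apply: functional_extensionality => c'.
case: c => [i|[b k]] /=; first by case: c' => [j|[al k']].
case: splitP => [al|a] /= eb.
  have -> : b = lshift M al by apply: val_inj.
  by case: c' => [j|[al' k']]; rewrite /upd /=.
have -> : b = rshift m a by apply: val_inj.
case: c' => [j|[al k']] //=; rewrite /upd /=; case: eqP => // -[e _].
by move: (ltn_ord al); rewrite e ltnNge leq_addr.
Qed.

Lemma ucoord_val (z : ljet) c c' : ucoord c = Some c' -> z c = proj_u z c'.
Proof.
case: c => [i [<-]|[b k]] //=; case: splitP => [al|a] // eb [<-] /=.
by have -> : b = lshift M al by apply: val_inj.
Qed.

Lemma pd_liftU c (g : dfun n m) : pd c (liftU (M := M) g) =
  if ucoord c is Some c' then liftU (pd c' g) else cst 0.
Proof.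
apply: functional_extensionality => z; rewrite /pd /liftU.
case E: (ucoord c) => [c'|].
  by rewrite (ucoord_val z E); under Derive_ext => t do rewrite proj_u_upd E.
by under Derive_ext => t do rewrite proj_u_upd E; apply: Derive_const.
Qed.

Lemma regular_liftU (g : dfun n m) : regular g -> regular (liftU (M := M) g).
Proof.
move=> [Dg Cg]; split=> [z c s|z].
  rewrite /liftU; case E: (ucoord c) => [c'|].
    by apply: (ex_derive_ext (fun t => g (upd (proj_u z) c' t))) => [t|//]; rewrite proj_u_upd E.
  apply: (ex_derive_ext (fun _ => g (proj_u z))); last exact: ex_derive_const.
  by move=> t; rewrite proj_u_upd E.
apply: continuous_comp (Cg _); apply/filterlim_locally => eps.
by exists eps => w hw [i|[al k]]; apply: hw.
Qed.

Lemma diff_fun_ord_liftU K (f : dfun n m) : diff_fun_ord K f -> diff_fun_ord K (liftU (M := M) f).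
Proof.
move=> [Hd Hs].
have Hd' : dep_ord K (liftU (M := M) f).
  by move=> z w Hx Hu; apply: Hd => [i|al k hk]; [apply: Hx | apply: Hu].
split=> //; apply: smooth_ord_of_regular => // cs.
suff [[cs' ->]|[b ->]] : (exists cs', iter_pd cs (liftU (M := M) f) = liftU (iter_pd cs' f)) \/
                        exists b, iter_pd cs (liftU (M := M) f) = cst b.
- by apply: regular_liftU; apply: smooth_ord_regular Hs cs'.
- exact: regular_cst.
elim: cs => [|c cs [[cs' IH]|[b IH]]] /=; first by left; exists [::].
  by rewrite IH pd_liftU; case: (ucoord c) => [c'|]; [left; exists (c' :: cs') | right; exists 0].
by right; rewrite IH pd_cst; exists 0.
Qed.

Lemma diff_fun_liftU (f : dfun n m) : diff_fun f -> diff_fun (liftU (M := M) f).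
Proof. by move=> [K Hf]; exists K; apply: diff_fun_ord_liftU. Qed.

Lemma Dt_liftU i (g : dfun n m) : Dt i (liftU (M := M) g) = liftU (Dt i g).
Proof.
apply: functional_extensionality => w; rewrite /Dt /liftU; congr Derive.
by apply: functional_extensionality => t; congr g; apply: functional_extensionality => -[j|[al k]].
Qed.

Lemma DI_liftU (s : seq 'I_n) (g : dfun n m) : DI s (liftU (M := M) g) = liftU (DI s g).
Proof. by elim: s => //= i s IH; rewrite IH Dt_liftU. Qed.

Lemma pdU_liftU al (s : seq 'I_n) (g : dfun n m) :
  pdU (lshift M) al s (liftU (M := M) g) = liftU (pdU id al s g).
Proof. by apply: functional_extensionality => w; rewrite /pdU pd_liftU /= split_lshift. Qed.

Lemma vcoord_upd a c (z : ljet) t : ucoord c <> None -> vcoord a (upd z c t) = vcoord a z.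
Proof.
rewrite /vcoord /upd; case: c => [i|[b k]] //= h.
by case: eqP => // -[eb _]; rewrite -eb split_rshift in h.
Qed.

End Lift.

Section Substitution.
Variables (n m M : nat) (Q : 'I_M -> dfun n m).
Hypothesis HQ : forall a, diff_fun (Q a).

(* [(a, k, g)] stands for [v^a_k * g] on the extended jet space and for
   [D_k Q^a * g] after the substitution [v = Q]. *)
Definition vterm := ('I_M * mi n * {g : dfun n m | diff_fun g})%type.

Definition vterm_sum (ts : seq vterm) : dfun n (m + M) :=
  fun w => \rsum_(t <- ts) (w (inr (rshift m t.1.1, t.1.2)) * liftU (M := M) (sval t.2) w).

Definition Qterm_sum (ts : seq vterm) : dfun n m :=
  fun z => \rsum_(t <- ts) (DK t.1.2 (Q t.1.1) z * sval t.2 z).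

Definition Dt_vterms (i : 'I_n) (ts : seq vterm) : seq vterm :=
  flatten [seq [:: (t.1.1, mi_add t.1.2 i, t.2);
                   (t.1, exist _ (Dt i (sval t.2)) (diff_fun_Dt i (svalP t.2)))] | t <- ts].

Lemma Dt_vterm_sum i ts : Dt i (vterm_sum ts) = vterm_sum (Dt_vterms i ts).
Proof.
apply: functional_extensionality => w; rewrite /vterm_sum /Dt_vterms big_flatten big_map.
rewrite Dt_sum => [|t]; last first.
  by apply: diff_fun_mul; [apply: diff_fun_crd | apply: diff_fun_liftU; apply: svalP].
apply: eq_bigr => t _; rewrite Dt_mul; [|apply: diff_fun_crd | apply: diff_fun_liftU; apply: svalP].
by rewrite Dt_crd Dt_liftU !big_cons big_nil /= Rplus_0_r.
Qed.

Lemma Dt_Qterm_sum i ts : Dt i (Qterm_sum ts) = Qterm_sum (Dt_vterms i ts).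
Proof.
apply: functional_extensionality => z; rewrite /Qterm_sum /Dt_vterms big_flatten big_map.
rewrite Dt_sum => [|t]; last by apply: diff_fun_mul; [apply: diff_fun_DI | apply: svalP].
apply: eq_bigr => t _; rewrite Dt_mul; [|apply: diff_fun_DI => // | apply: svalP].
by rewrite !big_cons big_nil /= -DK_add // Rplus_0_r.
Qed.

Lemma proj_u_substQ z : proj_u (substQ Q z) = z.
Proof. by apply: functional_extensionality => -[i|[al k]] //=; rewrite split_lshift. Qed.

Lemma vterm_sum_substQ ts z : vterm_sum ts (substQ Q z) = Qterm_sum ts z.
Proof. by apply: eq_bigr => t _; rewrite /= split_rshift /liftU proj_u_substQ. Qed.

Lemma DI_substQ (G : 'I_M -> dfun n m) (s : seq 'I_n) z : (forall a, diff_fun (G a)) ->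
  DI s (fun w => \rsum_(a < M) (vcoord a w * liftU (M := M) (G a) w)) (substQ Q z)
  = DI s (fun z => \rsum_(a < M) (Q a z * G a z)) z.
Proof.
move=> HG; pose ts := [seq (a, mi0 n, exist _ (G a) (HG a)) : vterm | a <- index_enum 'I_M].
have -> : (fun w => \rsum_(a < M) (vcoord a w * liftU (M := M) (G a) w)) = vterm_sum ts.
  by apply: functional_extensionality => w; rewrite /vterm_sum big_map.
have -> : (fun z => \rsum_(a < M) (Q a z * G a z)) = Qterm_sum ts.
  apply: functional_extensionality => w; rewrite /Qterm_sum big_map.
  by under eq_bigr do rewrite DK0.
have -> : DI s (vterm_sum ts) = vterm_sum (foldr Dt_vterms ts s).
  by elim: s => //= i s ->; rewrite Dt_vterm_sum.
have -> : DI s (Qterm_sum ts) = Qterm_sum (foldr Dt_vterms ts s).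
  by elim: s => //= i s ->; rewrite Dt_Qterm_sum.
exact: vterm_sum_substQ.
Qed.

End Substitution.

Lemma is_derive_Rsum (T : Type) (r : seq T) (G : T -> R -> R) t :
  (forall x, ex_derive (G x) t) ->
  is_derive (fun s => \rsum_(x <- r) G x s) t (\rsum_(x <- r) Derive (G x) t).
Proof.
move=> HG; elim: r => [|x r IH].
  rewrite big_nil; apply: (is_derive_ext (fun _ => 0)); last exact: is_derive_const.
  by move=> s; rewrite big_nil.
rewrite big_cons; apply: (is_derive_ext (fun s => G x s + \rsum_(y <- r) G y s)).
  by move=> s; rewrite big_cons.
exact: (is_derive_plus (K := R_AbsRing) (V := R_NormedModule) _ _ _ _ _
         (Derive_correct _ _ (HG x)) IH).
Qed.

Section Noether.
Variables (n m M N : nat) (F : 'I_M -> dfun n m) (P : 'I_m -> dfun n m).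
Hypotheses (HF : forall a, diff_fun (F a)) (HP : forall al, diff_fun (P al)).

(* [v] does not vary along a u-coordinate, so only the factors [F_a] are differentiated. *)
Lemma pdU_Lag al s :
  pdU (lshift M) al s (Lag F) = vdF (lshift M) (@vcoord n m M) (fun a => liftU (M := M) (F a)) al s.
Proof.
apply: functional_extensionality => w; rewrite /pdU /vdF /Lag /pd.
set c := inr (lshift M al, mi_cnt s).
have hc : ucoord c <> None by rewrite /= split_lshift.
under Derive_ext => t do under eq_bigr => a _ do rewrite (vcoord_upd _ _ _ hc).
rewrite (is_derive_unique _ _ _ (is_derive_Rsum _ _)) => [|a]; last first.
  apply: ex_derive_scal; have [K HK] := diff_fun_liftU M (HF a).
  by have [Hd _] := diff_fun_ord_regular HK; apply: Hd.
rewrite /Rdiv big_distrl /=; apply: eq_bigr => a _.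
by rewrite Derive_scal /pdU /pd -/c /Rdiv Rmult_assoc.
Qed.

Lemma Noether_identity_Lag z :
  frech1 (lshift M) N (fun al => liftU (M := M) (P al)) (Lag F) z
  = \rsum_(al < m) (liftU (M := M) (P al) z * euler (lshift M) N (Lag F) al z)
    + \rsum_(i < n) Dt i (Phi N P F i) z.
Proof.
have HPl al : diff_fun (liftU (M := M) (P al)) by apply: diff_fun_liftU.
have Hv a : diff_fun (@vcoord n m M a) by apply: (diff_fun_crd (inr (rshift m a, mi0 n))).
have HFl a : diff_fun (liftU (M := M) (F a)) by apply: diff_fun_liftU.
rewrite /Phi -(sum_Dt_Psi (lshift M) N HPl Hv HFl z) /frech1 /euler.
under eq_bigr => al _ do under eq_bigr => k _ do under eq_bigr => I _ do rewrite pdU_Lag.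
under [X in _ = X + _]eq_bigr => al _ do under eq_bigr => k _ do under eq_bigr => I _ do
  rewrite pdU_Lag.
by rewrite Rplus_minus.
Qed.

Lemma Phi_substQ (Q : 'I_M -> dfun n m) i z : (forall a, diff_fun (Q a)) ->
  Phi N P F i (substQ Q z) = Psi id N P Q F i z.
Proof.
move=> HQ; apply: eq_bigr => k _; apply: eq_bigr => j _.
apply: eq_bigr => J _; apply: eq_bigr => K _; apply: eq_bigr => al _.
rewrite DI_liftU /liftU proj_u_substQ; congr (_ * _).
set s := (_ ++ _ ++ _).
have -> : (fun w => \rsum_(a < M) (vcoord a w * pdU (lshift M) al s (liftU (F a)) w))
        = fun w => \rsum_(a < M) (vcoord a w * liftU (pdU id al s (F a)) w).
  by apply: functional_extensionality => w; under eq_bigr do rewrite pdU_liftU.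
by apply: DI_substQ => // a; apply: diff_fun_pdU.
Qed.

Lemma adjoint_symmetry_identity (Q : 'I_M -> dfun n m) z : (forall a, diff_fun (Q a)) ->
  \rsum_(a < M) (Q a z * frech id N P F a z) - \rsum_(al < m) (P al z * adj id N Q F al z)
  = \rsum_(i < n) Dt i (Psi id N P Q F i) z.
Proof.
move=> HQ; rewrite -(sum_Dt_Psi id N HP HQ HF z); congr (_ - _).
rewrite /frech /frech1 /vdF.
under eq_bigr => a _ do rewrite big_distrr /=.
rewrite exchange_big /=; apply: eq_bigr => al _.
under eq_bigr => a _ do rewrite big_distrr /=.
rewrite exchange_big /=; apply: eq_bigr => k _.
under eq_bigr => a _ do rewrite big_distrr /=.
rewrite exchange_big /=; apply: eq_bigr => I _.
by rewrite big_distrr /=; apply: eq_bigr => a _; ring.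
Qed.

End Noether.

Theorem theorem2 (n m M N : nat)
    (F : 'I_M -> dfun n m) (P : 'I_m -> dfun n m) (Q : 'I_M -> dfun n m)
    (HF : forall a : 'I_M, diff_fun_ord N (F a))
    (HP : forall al : 'I_m, diff_fun (P al))
    (HQ : forall a : 'I_M, diff_fun (Q a))
    (Hadj : forall al : 'I_m, onE F (adj (fun b : 'I_m => b) N Q F al))
    (Hsym : forall a : 'I_M, onE F (frech (fun b : 'I_m => b) N P F a)) :
  (* Phi(P;L) = Psi(P,v;F) is the current in  delta_P L = P^al E_{u^al}(L) + D_i Phi^i *)
  (forall z : jet n (m + M),
      frech1 (lshift M) N (fun al => liftU (M:=M) (P al)) (Lag F) z
      = \rsum_(al < m) (liftU (M:=M) (P al) z * euler (lshift M) N (Lag F) al z)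
        + \rsum_(i < n) Dt i (Phi N P F i) z) /\
  (* Phi^i(P;L)|_{v=Q} = Psi^i(P,Q;F) *)
  (forall (i : 'I_n) (z : jet n m),
      Phi N P F i (substQ Q z) = Psi (fun b : 'I_m => b) N P Q F i z) /\
  (* Q^a (delta_P F)_a - P^al (delta^*_Q F)_al = D_i Psi^i(P,Q;F) *)
  (forall z : jet n m,
      \rsum_(a < M) (Q a z * frech (fun b : 'I_m => b) N P F a z)
      - \rsum_(al < m) (P al z * adj (fun b : 'I_m => b) N Q F al z)
      = \rsum_(i < n) Dt i (Psi (fun b : 'I_m => b) N P Q F i) z) /\
  (* D_i Psi^i(P,Q;F) |_E = 0 *)
  onE F (fun z => \rsum_(i < n) Dt i (Psi (fun b : 'I_m => b) N P Q F i) z).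
Proof.
have HF' a : diff_fun (F a) by exists N.
split; first by move=> z; apply: Noether_identity_Lag.
split; first by move=> i z; apply: Phi_substQ.
split; first by move=> z; apply: adjoint_symmetry_identity.
move=> z onEz; rewrite -adjoint_symmetry_identity //.
rewrite big1 => [|a _]; last by rewrite (Hsym a z onEz) Rmult_0_r.
rewrite big1 => [|al _]; last by rewrite (Hadj al z onEz) Rmult_0_r.
by rewrite Rminus_diag.
Qed.
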